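(* Let $E$ be a finite-dimensional real vector space and $\omega_0,\omega_1$ two symplectic forms on $E$. Then the space of complex structures $J$ on $E$ that are tamed by both $\omega_0$ and $\omega_1$ is either empty or contractible.
   Context: A complex structure $J$ ($J^2=-\mathrm{id}$) on $E$ is tamed by a symplectic form $\omega$ if $\omega(v,Jv)>0$ for every nonzero $v\in E$. *)

From HB Require Import structures.
From mathcomp Require Import all_boot all_order all_algebra.
From mathcomp Require Import all_classical all_reals.
From mathcomp Require Import topology normedtype.
Import numFieldNormedType.Exports.
Set Implicit Arguments. Unset Strict Implicit. Unset Printing Implicit Defensive.
Import Order.TTheory GRing.Theory Num.Theory.
Local Open Scope classical_set_scope.
Local Open Scope ring_scope.

(* E = R^n, vectors are row vectors 'rV[R]_n; a linear endomorphism is a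
   matrix J acting by v |-> v *m J; a bilinear form is a matrix W with
   omega(u, v) = u *m W *m v^T. *)

Definition bform (R : realType) (n : nat) (W : 'M[R]_n) (u v : 'rV[R]_n) : R :=
  (u *m W *m v^T) 0 0.

Definition symplectic (R : realType) (n : nat) (W : 'M[R]_n) : Prop :=
  W^T = - W /\ W \in unitmx.

Definition complex_structure (R : realType) (n : nat) (J : 'M[R]_n) : Prop :=
  J *m J = - 1%:M.

Definition tamed (R : realType) (n : nat) (W J : 'M[R]_n) : Prop :=
  forall v : 'rV[R]_n, v != 0 -> 0 < bform W v (v *m J).

Definition contractible (R : realType) (T : topologicalType) (A : set T) : Prop :=
  exists x0 : T, A x0 /\
  exists H : R * T -> T,
    {within `[(0:R), 1]%classic `*` A, continuous H} /\
    (forall t x, `[(0:R), 1]%classic t -> A x -> A (H (t, x))) /\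
    (forall x, A x -> H (0, x) = x /\ H (1, x) = x0).

(* Fix J0 in the set S.  For any J in S, the sum J + J0 is invertible (a kernel
   vector w would give w J = - w J0, and both cannot be tamed), so the Cayley
   transform Y = (J - J0) (J + J0)^-1 is defined; it anticommutes with J0, and
   P_1 = 1 - Y = 2 J0 (J + J0)^-1 intertwines J with J0.  Along the segment
   P_s = 1 - s Y the conjugates J_s = P_s^-1 J0 P_s are complex structures
   joining J0 to J.  For w <> 0 and u = w Y one has w P_s = w - s u and
   w J0 P_s = (w + s u) J0, so the taming form along the path,
   omega(w - s u, (w + s u) J0), is a concave quadratic in s that is positive
   at s = 0 and s = 1, hence on [0, 1].  The path depends on J and J0 only, so
   it stays tamed by both forms, and its entries are rational in (s, J) with
   nonvanishing denominators; (t, J) |-> J_(1-t) contracts S onto J0. *)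

From HB Require Import structures.
From mathcomp Require Import all_boot all_order all_algebra.
From mathcomp Require Import all_classical all_reals.
From mathcomp Require Import topology normedtype.
From mathcomp Require Import ring lra.
Import numFieldNormedType.Exports.
Import Order.TTheory GRing.Theory Num.Theory.
Local Open Scope classical_set_scope.
Local Open Scope ring_scope.

Set Implicit Arguments.
Unset Strict Implicit.
Unset Printing Implicit Defensive.

Section MatrixContinuity.
Variables (R : numFieldType) (T : topologicalType) (x : T).

Lemma continuous_mxP m n (f : T -> 'M[R]_(m, n)) :
  {for x, continuous f} <-> forall i j, {for x, continuous (fun y => f y i j)}.
Proof.
split=> [fx i j | fx].
  exact: (continuous_comp fx (@coord_continuous R m n i j (f x))).
apply/cvg_mx_entourageP => A entA.
apply: (@filter_forall _ _ (fun i y => forall j, (f x i j, f y i j) \in A)).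
move=> i.
apply: (@filter_forall _ _ (fun j y => (f x i j, f y i j) \in A)) => j.
have := fx i j; move/cvg_entourageP => /(_ A entA).
by move=> h; near=> y; rewrite inE; near: y.
Unshelve. all: by end_near. Qed.

Lemma continuous_sum (I : Type) (r : seq I) (P : pred I) (F : I -> T -> R) :
  (forall i, P i -> {for x, continuous (F i)}) ->
  {for x, continuous (fun y => \sum_(i <- r | P i) F i y)}.
Proof. by move=> Fx; apply: cvg_big => //; exact: add_continuous. Qed.

Lemma continuous_prod (I : Type) (r : seq I) (P : pred I) (F : I -> T -> R) :
  (forall i, P i -> {for x, continuous (F i)}) ->
  {for x, continuous (fun y => \prod_(i <- r | P i) F i y)}.
Proof. by move=> Fx; apply: cvg_big => //; exact: mul_continuous. Qed.

Lemma continuous_mulmx m n p (f : T -> 'M[R]_(m, n)) (g : T -> 'M[R]_(n, p)) :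
  {for x, continuous f} -> {for x, continuous g} ->
  {for x, continuous (fun y => f y *m g y)}.
Proof.
move=> /continuous_mxP fx /continuous_mxP gx; apply/continuous_mxP => i j.
have -> : (fun y => (f y *m g y) i j) = fun y => \sum_k f y i k * g y k j.
  by apply/funext => y; rewrite mxE.
by apply: continuous_sum => k _; exact: continuousM.
Qed.

Lemma continuous_det n (f : T -> 'M[R]_n) :
  {for x, continuous f} -> {for x, continuous (fun y => \det (f y))}.
Proof.
move=> /continuous_mxP fx; apply: continuous_sum => s _.
apply: continuousM; first exact: cvg_cst.
by apply: continuous_prod => i _; exact: fx.
Qed.

Lemma continuous_adj n (f : T -> 'M[R]_n) :
  {for x, continuous f} -> {for x, continuous (fun y => \adj (f y))}.
Proof.
move=> /continuous_mxP fx; apply/continuous_mxP => i j.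
have -> : (fun y => \adj (f y) i j) =
    fun y => (-1) ^+ (j + i) * \det (row' j (col' i (f y))).
  by apply/funext => y; rewrite mxE.
apply: continuousM; first exact: cvg_cst.
apply: continuous_det; apply/continuous_mxP => k l.
have -> : (fun y => row' j (col' i (f y)) k l) =
    fun y => f y (lift j k) (lift i l).
  by apply/funext => y; rewrite !mxE.
exact: fx.
Qed.

Lemma continuous_invmx n (f : T -> 'M[R]_n) :
  {for x, continuous f} -> f x \in unitmx ->
  {for x, continuous (fun y => invmx (f y))}.
Proof.
move=> fx; rewrite unitmxE unitfE => detx.
have near_inv : \forall y \near x, (\det (f y))^-1 *: \adj (f y) = invmx (f y).
  near=> y; suff dety : \det (f y) != 0 by rewrite /invmx unitmxE unitfE dety.
  by near: y; exact: cvgr_neq0 _ (continuous_det fx) detx.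
apply: cvg_trans (near_eq_cvg near_inv) _.
rewrite /invmx unitmxE unitfE detx.
apply: (@continuousZ _ _ _ (fun y => (\det (f y))^-1) (fun y => \adj (f y)) x).
  exact: continuousV (continuous_det fx).
exact: continuous_adj.
Unshelve. all: by end_near. Qed.

End MatrixContinuity.

Section CayleyTransform.
Variables (F : comUnitRingType) (n : nat).
Implicit Types (A J P : 'M[F]_n) (s : F).

Definition cayley (J0 J : 'M[F]_n) := (J - J0) *m invmx (J + J0).

Definition cayley_factor (J0 J : 'M[F]_n) s := 1%:M - s *: cayley J0 J.

Definition cayley_path (J0 J : 'M[F]_n) s :=
  invmx (cayley_factor J0 J s) *m J0 *m cayley_factor J0 J s.

Lemma invconj_sqrN1 P A : P \in unitmx -> A *m A = - 1%:M ->
  (invmx P *m A *m P) *m (invmx P *m A *m P) = - 1%:M.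
Proof.
move=> uP AA; rewrite !mulmxA mulmxK // -(mulmxA _ A A) AA.
by rewrite mulmxN mulmx1 mulNmx mulVmx.
Qed.

Lemma cayley_path0 (J0 J : 'M[F]_n) : cayley_path J0 J 0 = J0.
Proof.
by rewrite /cayley_path /cayley_factor scale0r subr0 invmx1 mul1mx mulmx1.
Qed.

Section ComplexStructures.
Variables (J0 J : 'M[F]_n).
Hypotheses (cJ0 : J0 *m J0 = - 1%:M) (cJ : J *m J = - 1%:M).
Hypothesis uK : (J + J0) \in unitmx.

Lemma invmx_addmx_mulJ : invmx (J + J0) *m J = J0 *m invmx (J + J0).
Proof.
have KJ0 : (J + J0) *m J0 = J *m (J + J0).
  by rewrite mulmxDl mulmxDr cJ0 cJ addrC.
by rewrite -[RHS](mulKmx uK) (mulmxA (J + J0)) KJ0 mulmxK.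
Qed.

Lemma invmx_addmx_mulJ0 : invmx (J + J0) *m J0 = J *m invmx (J + J0).
Proof.
have KJ : (J + J0) *m J = J0 *m (J + J0).
  by rewrite mulmxDl mulmxDr cJ0 cJ addrC.
by rewrite -[RHS](mulKmx uK) (mulmxA (J + J0)) KJ mulmxK.
Qed.

Lemma cayley_anticomm : cayley J0 J *m J0 = - (J0 *m cayley J0 J).
Proof.
rewrite /cayley -mulmxA invmx_addmx_mulJ0 !mulmxA -mulNmx; congr (_ *m _).
by rewrite mulmxBl mulmxBr cJ cJ0 opprB addrC.
Qed.

Lemma mulJ0_cayley_factor s :
  J0 *m cayley_factor J0 J s = (1%:M + s *: cayley J0 J) *m J0.
Proof.
rewrite /cayley_factor mulmxBr mulmxDl mulmx1 mul1mx -!scalemxAr -scalemxAl.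
by rewrite cayley_anticomm scalerN.
Qed.

Lemma cayley_factor1 : cayley_factor J0 J 1 = 2%:R *: (J0 *m invmx (J + J0)).
Proof.
rewrite /cayley_factor /cayley scale1r -(mulmxV uK) -mulmxBl scalemxAl.
by congr (_ *m _); apply/matrixP => i j; rewrite !mxE; ring.
Qed.

Lemma cayley_factor1_mulJ :
  cayley_factor J0 J 1 *m J = J0 *m cayley_factor J0 J 1.
Proof.
rewrite cayley_factor1 -scalemxAl -mulmxA invmx_addmx_mulJ -scalemxAr.
by rewrite mulmxA.
Qed.

Lemma cayley_factor1_unitmx :
  2%:R \is a @GRing.unit F -> cayley_factor J0 J 1 \in unitmx.
Proof.
move=> u2; have [uJ0 _] : J0 \in unitmx /\ - J0 \in unitmx.
  by apply: mulmx1_unit; rewrite mulmxN cJ0 opprK.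
by rewrite cayley_factor1 unitmxZ // unitmx_mul unitmx_inv uJ0 uK.
Qed.

Lemma cayley_path1 : 2%:R \is a @GRing.unit F -> cayley_path J0 J 1 = J.
Proof.
move=> /cayley_factor1_unitmx uP1.
by rewrite /cayley_path -mulmxA -cayley_factor1_mulJ mulKmx.
Qed.

End ComplexStructures.
End CayleyTransform.

Lemma concave_quadratic_gt0 (R : realFieldType) (a b c s : R) :
  0 < a -> 0 < a + b - c -> 0 <= c -> 0 <= s <= 1 ->
  0 < a + s * b - s ^+ 2 * c.
Proof.
move=> a0 abc0 c0 /andP[s0 s1].
have -> : a + s * b - s ^+ 2 * c =
    (1 - s) * a + s * (a + b - c) + s * (1 - s) * c by ring.
move: s0; rewrite le_eqVlt => /predU1P[<- | s_gt0].
  by rewrite !mul0r subr0 mul1r !addr0.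
have : 0 <= (1 - s) * a by rewrite mulr_ge0 ?subr_ge0 ?(ltW a0).
have : 0 <= s * (1 - s) * c by rewrite !mulr_ge0 ?subr_ge0 ?(ltW s_gt0).
have : 0 < s * (a + b - c) by exact: mulr_gt0.
lra.
Qed.

Section Taming.
Variables (R : realType) (n : nat).
Implicit Types (W J P : 'M[R]_n) (u v w : 'rV[R]_n).

Lemma bform0l W v : bform W 0 v = 0.
Proof. by rewrite /bform !mul0mx mxE. Qed.

Lemma bform_mulmx W P u v :
  bform W (u *m P) (v *m P) = bform (P *m W *m P^T) u v.
Proof. by rewrite /bform trmx_mul !mulmxA. Qed.

Lemma bform_expand W J u v s :
  bform W (u - s *: v) ((u + s *: v) *m J) =
  bform W u (u *m J) + s * (bform W u (v *m J) - bform W v (u *m J))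
    - s ^+ 2 * bform W v (v *m J).
Proof.
rewrite /bform !mulmxDl !mulNmx -!scalemxAl linearD /= linearZ /= !mulmxDr.
by rewrite -!scalemxAr !mxE; ring.
Qed.

Lemma tamed_congr W J (J0 : 'M[R]_n) P : P \in unitmx -> P *m J = J0 *m P ->
  tamed (P *m W *m P^T) J0 <-> tamed W J.
Proof.
move=> uP PJ; split=> tamedJ v v_neq0.
- set w := v *m invmx P.
  have v_eq : v = w *m P by rewrite mulmxKV.
  have w_neq0 : w != 0.
    by apply: contraNneq v_neq0 => w0; rewrite v_eq w0 mul0mx.
  by rewrite v_eq -mulmxA PJ mulmxA bform_mulmx; exact: tamedJ.
- have vP_neq0 : v *m P != 0.
    by apply: contraNneq v_neq0 => vP0; rewrite -(mulmxK uP v) vP0 mul0mx.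
  by rewrite -bform_mulmx -mulmxA -PJ mulmxA; exact: tamedJ.
Qed.

Lemma tamed_congr_unitmx W (J0 : 'M[R]_n) P :
  tamed (P *m W *m P^T) J0 -> P \in unitmx.
Proof.
move=> tamedJ0; rewrite unitmxE unitfE; apply/negP => /det0P [w w_neq0 wP0].
by have := tamedJ0 w w_neq0; rewrite -bform_mulmx wP0 bform0l ltxx.
Qed.

Lemma tamed_addmx_unitmx W J (J0 : 'M[R]_n) :
  tamed W J -> tamed W J0 -> (J + J0) \in unitmx.
Proof.
move=> tJ tJ0; rewrite unitmxE unitfE; apply/negP => /det0P [w w_neq0 wK0].
have wJ : w *m J = - (w *m J0) by apply/eqP; rewrite -addr_eq0 -mulmxDr wK0.
have := tJ0 w w_neq0; have := tJ w w_neq0.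
by rewrite wJ /bform linearN /= mulmxN mxE; lra.
Qed.

End Taming.

Section CayleyPathTaming.
Variables (R : realType) (n : nat) (W J0 J : 'M[R]_n).
Hypotheses (cJ0 : complex_structure J0) (cJ : complex_structure J).
Hypotheses (tJ0 : tamed W J0) (tJ : tamed W J).

Let uK : (J + J0) \in unitmx := tamed_addmx_unitmx tJ tJ0.

Lemma tamed_cayley_factor s : 0 <= s <= 1 ->
  tamed (cayley_factor J0 J s *m W *m (cayley_factor J0 J s)^T) J0.
Proof.
move=> s01 w w_neq0; set u := w *m cayley J0 J.
have along_path t :
    bform (cayley_factor J0 J t *m W *m (cayley_factor J0 J t)^T) w (w *m J0)
    = bform W (w - t *: u) ((w + t *: u) *m J0).
  rewrite -bform_mulmx -mulmxA (mulJ0_cayley_factor cJ0 cJ uK) mulmxA.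
  by rewrite /cayley_factor mulmxBr mulmxDr !mulmx1 -!scalemxAr.
have at1 : 0 < bform W (w - 1 *: u) ((w + 1 *: u) *m J0).
  have uP1 : cayley_factor J0 J 1 \in unitmx.
    by apply: cayley_factor1_unitmx; rewrite // unitfE pnatr_eq0.
  have := (tamed_congr W uP1 (cayley_factor1_mulJ cJ0 cJ uK)).2 tJ w w_neq0.
  by rewrite along_path.
rewrite along_path bform_expand; apply: concave_quadratic_gt0 => //.
- exact: tJ0.
- by move: at1; rewrite bform_expand expr1n !mul1r.
- by have [->|u_neq0] := eqVneq u 0; [rewrite bform0l | exact/ltW/tJ0].
Qed.

Lemma cayley_factor_unitmx s : 0 <= s <= 1 -> cayley_factor J0 J s \in unitmx.
Proof. by move=> s01; exact: tamed_congr_unitmx (tamed_cayley_factor s01). Qed.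

Lemma tamed_cayley_path s : 0 <= s <= 1 -> tamed W (cayley_path J0 J s).
Proof.
move=> s01; have uP := cayley_factor_unitmx s01.
have intertwine :
    cayley_factor J0 J s *m cayley_path J0 J s = J0 *m cayley_factor J0 J s.
  by rewrite /cayley_path !mulmxA mulmxV // mul1mx.
exact: (tamed_congr W uP intertwine).1 (tamed_cayley_factor s01).
Qed.

Lemma complex_structure_cayley_path s : 0 <= s <= 1 ->
  complex_structure (cayley_path J0 J s).
Proof. by move=> s01; exact: invconj_sqrN1 (cayley_factor_unitmx s01) cJ0. Qed.

End CayleyPathTaming.

Lemma continuous_cayley_path (R : numFieldType) (n : nat) (T : topologicalType)
    (J0 : 'M[R]_n) (f : T -> 'M[R]_n) (s : T -> R) (x : T) :
  {for x, continuous f} -> {for x, continuous s} ->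
  (f x + J0) \in unitmx -> cayley_factor J0 (f x) (s x) \in unitmx ->
  {for x, continuous (fun y => cayley_path J0 (f y) (s y))}.
Proof.
move=> fx sx uK uP.
have cst (A : 'M[R]_n) : {for x, continuous (fun=> A)} by exact: cvg_cst.
have Kx : {for x, continuous (fun y => f y + J0)} := continuousD fx (cst J0).
have Px : {for x, continuous (fun y => cayley_factor J0 (f y) (s y))}.
  apply: continuousB (cst _) (continuousZ sx _).
  exact: continuous_mulmx (continuousB fx (cst J0)) (continuous_invmx Kx uK).
exact: continuous_mulmx (continuous_mulmx (continuous_invmx Px uP) (cst J0)) Px.
Qed.

Theorem proposition1p1 (R : realType) (n : nat) (W0 W1 : 'M[R]_n) :
  symplectic W0 -> symplectic W1 ->
  let S := [set J : 'M[R]_n | complex_structure J /\ tamed W0 J /\ tamed W1 J] in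
  S = set0 \/ contractible R S.
Proof.
move=> _ _ S.
have [[J0 SJ0]|noS] := pselect (exists J0, S J0); last first.
  by left; apply/seteqP; split => J // SJ; apply: noS; exists J.
right; exists J0; split => //; case: SJ0 => cJ0 [t0J0 t1J0].
exists (fun p : R * 'M[R]_n => cayley_path J0 p.2 (1 - p.1)).
have s01 t : `[(0:R), 1]%classic t -> 0 <= 1 - t <= 1.
  by rewrite /= in_itv /= => /andP[t0 t1]; apply/andP; split; lra.
split; [|split].
- apply: continuous_in_subspaceT => -[t J].
  rewrite in_setE => -[/= /s01 st [cJ [t0J _]]].
  apply: continuous_cayley_path.
  + exact: cvg_snd.
  + by apply: continuousB; [exact: cvg_cst | exact: cvg_fst].
  + exact: tamed_addmx_unitmx t0J t0J0.
  + exact: (cayley_factor_unitmx cJ0 cJ t0J0 t0J st).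
- move=> t J /s01 st [cJ [t0J t1J]]; split.
    exact: (complex_structure_cayley_path cJ0 cJ t0J0 t0J st).
  by split; exact: tamed_cayley_path.
- move=> J [cJ [t0J _]]; rewrite subr0 subrr cayley_path0; split => //.
  apply: cayley_path1 cJ0 cJ (tamed_addmx_unitmx t0J t0J0) _.
  by rewrite unitfE pnatr_eq0.
Qed.
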